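(* Let $\Pi$ be a protocol and $\sigma,\sigma'\in\mathrm{br}(\Pi)$ be two sender best responses such that under each of $(\Pi,\sigma)$ and $(\Pi,\sigma')$ the game ends with probability $1$. Then $U^R(\Pi,\sigma)=U^R(\Pi,\sigma')$.
   Context: Setting. The state of nature is $\theta\in\Theta=\{H,L\}$ with prior $\Pr(\theta=H)=p\in(0,1)$. A sender privately observes $\theta$; a receiver does not. $S$ is a finite signal set; conditional on $\theta$, signals are i.i.d. with distribution $\pi_\theta$ on $S$, where $\pi_\theta(s)>0$ for all $s\in S,\theta\in\Theta$, and $\pi_H\neq\pi_L$. The receiver has a finite set of memory states $M$ and chooses a protocol $\Pi=(f,g,a)$: a transition function $f:M\times S\to\Delta(M)$ ($f(i,s)(j)$ is the probability of moving from memory state $i$ to $j$ after signal $s$), an initial distribution $g\in\Delta(M)$ of $m_0$, and an action rule $a:M\to[0,1]$ (probability of action $H$ if the game ends in that memory state). A sender strategy is $\sigma:M\times\Theta\to[0,1]$, the probability of stopping in the current memory state given $\theta$. Timing: $m_0\sim g$; in each period $t=0,1,\dots$, with current memory state $m_t$, the game ends if $m_t$ is absorbing ($f(m_t,s)(m_t)=1$ for all $s$); otherwise the sender stops with probability $\sigma(m_t,\theta)$, ending the game; if not stopped, a signal $s_t\sim\pi_\theta$ is generated and $m_{t+1}\sim f(m_t,s_t)$. When the game ends in state $m_t$ the receiver takes action $H$ with probability $a(m_t)$ and $L$ otherwise. The receiver's payoff is $1$ if the action equals $\theta$ and $0$ otherwise; the sender's payoff is $1$ if the action is $H$ and $0$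 otherwise; there is no discounting; if the game never ends both get $0$. $U^S(\Pi,\sigma),U^R(\Pi,\sigma)$ denote expected payoffs and $\mathrm{br}(\Pi)=\arg\sup_\sigma U^S(\Pi,\sigma)$ is the set of sender best responses. *)

From HB Require Import structures.
From mathcomp Require Import all_boot all_order all_algebra.
From mathcomp Require Import all_classical all_reals all_analysis.
Set Implicit Arguments. Unset Strict Implicit. Unset Printing Implicit Defensive.
Import Order.TTheory GRing.Theory Num.Theory.
Local Open Scope ring_scope.

(* State of nature: theta : bool, with true = H and false = L. *)

Section Game.
Variables (R : realType) (S M : finType).

Definition is_distr (T : finType) (d : T -> R) :=
  (forall x, 0 <= d x) /\ \sum_(x : T) d x = 1.

Definition signal_ok (pi : bool -> S -> R) :=
  (forall th s, 0 < pi th s) /\ (forall th, \sum_(s : S) pi th s = 1)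
  /\ pi true <> pi false.

(* protocol (f, g, a): f i s j = probability of moving from i to j after s *)
Definition protocol_ok (f : M -> S -> M -> R) (g : M -> R) (a : M -> R) :=
  (forall i s, is_distr (f i s)) /\ is_distr g /\ (forall m, 0 <= a m <= 1).

(* sender strategy: probability of stopping in memory state m given theta *)
Definition strategy_ok (sigma : M -> bool -> R) :=
  forall m th, 0 <= sigma m th <= 1.

Definition absorbing (f : M -> S -> M -> R) (m : M) : bool :=
  [forall s, f m s m == 1].

Variables (pi : bool -> S -> R) (f : M -> S -> M -> R) (g : M -> R).

(* alive th sigma t m = Pr(game not ended before period t and m_t = m | theta) *)
Fixpoint alive (sigma : M -> bool -> R) (th : bool) (t : nat) : M -> R :=
  match t with
  | 0 => g
  | t'.+1 => fun j =>
      \sum_(m : M | ~~ absorbing f m)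
        alive sigma th t' m * (1 - sigma m th) *
        \sum_(s : S) pi th s * f m s j
  end.

Definition ends_at (sigma : M -> bool -> R) (th : bool) (t : nat) (m : M) : R :=
  if absorbing f m then alive sigma th t m
  else alive sigma th t m * sigma m th.

Definition end_prob (sigma : M -> bool -> R) (th : bool) (m : M) : R :=
  limn (fun n => \sum_(t < n) ends_at sigma th t m).

Definition ends_prob (p : R) (sigma : M -> bool -> R) : R :=
  p * \sum_(m : M) end_prob sigma true m
  + (1 - p) * \sum_(m : M) end_prob sigma false m.

(* sender's expected payoff: 1 iff action H *)
Definition US (p : R) (a : M -> R) (sigma : M -> bool -> R) : R :=
  p * \sum_(m : M) end_prob sigma true m * a m
  + (1 - p) * \sum_(m : M) end_prob sigma false m * a m.

(* receiver's expected payoff: 1 iff action matches theta *)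
Definition UR (p : R) (a : M -> R) (sigma : M -> bool -> R) : R :=
  p * \sum_(m : M) end_prob sigma true m * a m
  + (1 - p) * \sum_(m : M) end_prob sigma false m * (1 - a m).

Definition best_response (p : R) (a : M -> R) (sigma : M -> bool -> R) :=
  strategy_ok sigma /\
  forall sigma', strategy_ok sigma' -> US p a sigma' <= US p a sigma.

End Game.

From HB Require Import structures.
From mathcomp Require Import all_boot all_order all_algebra.
From mathcomp Require Import all_classical all_reals all_analysis.
From mathcomp Require Import ring lra.
Set Implicit Arguments. Unset Strict Implicit. Unset Printing Implicit Defensive.
Import Order.TTheory GRing.Theory Num.Theory.
Import numFieldNormedType.Exports.
Local Open Scope classical_set_scope.
Local Open Scope ring_scope.

(* Each type of sender can imitate the other best response without changing
   the behaviour of the other type, so both best responses give the L-type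
   the same payoff, and they give the sender the same total payoff.  Each type
   ends the game with probability at most 1, so if the game ends almost surely
   then it ends almost surely for each type.  The receiver's payoff is then a
   fixed affine function of the sender's payoff and of the L-type's payoff. *)

Section Dynamics.
Context {R : realType} {S M : finType}.
Context { pi : bool -> S -> R } {f : M -> S -> M -> R} {g : M -> R}.
Hypothesis pi_ge0 : forall th s, 0 <= pi th s.
Hypothesis pi_sum1 : forall th, \sum_s pi th s = 1.
Hypothesis f_distr : forall i s, is_distr (f i s).
Hypothesis g_distr : is_distr g.
Variables (sigma : M -> bool -> R) (th : bool).
Hypothesis sigma_ok : strategy_ok sigma.

Lemma alive_ge0 t m : 0 <= alive pi f g sigma th t m.
Proof.
elim: t m => [|t IH] m /=; first exact: g_distr.1.
apply: sumr_ge0 => i _; apply: mulr_ge0; first apply: mulr_ge0 => //.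
  by rewrite subr_ge0; case/andP: (sigma_ok i th).
by apply: sumr_ge0 => s _; apply: mulr_ge0 => //; exact: (f_distr i s).1.
Qed.

Lemma ends_at_ge0 t m : 0 <= ends_at pi f g sigma th t m.
Proof.
rewrite /ends_at; case: absorbing; first exact: alive_ge0.
by apply: mulr_ge0; [exact: alive_ge0 | case/andP: (sigma_ok m th)].
Qed.

Lemma sum_alive_succ t :
  \sum_m ends_at pi f g sigma th t m + \sum_j alive pi f g sigma th t.+1 j
  = \sum_m alive pi f g sigma th t m.
Proof.
rewrite /= exchange_big /=.
have carried m : \sum_j (alive pi f g sigma th t m * (1 - sigma m th) *
      \sum_s pi th s * f m s j) = alive pi f g sigma th t m * (1 - sigma m th).
  rewrite -mulr_sumr exchange_big /=.
  under eq_bigr => s _ do rewrite -mulr_sumr (f_distr m s).2 mulr1.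
  by rewrite pi_sum1 mulr1.
under [X in _ + X]eq_bigr => m _ do rewrite carried.
rewrite (bigID (absorbing f) predT (alive _ _ _ _ _ _)) /=.
rewrite (bigID (absorbing f) predT (ends_at _ _ _ _ _ _)) /= -addrA -big_split /=.
congr (_ + _); first by apply: eq_bigr => m abs_m; rewrite /ends_at abs_m.
by apply: eq_bigr => m /negbTE nabs_m; rewrite /ends_at nabs_m; ring.
Qed.

Lemma sum_ends_at_alive n :
  \sum_(t < n) \sum_m ends_at pi f g sigma th t m
    + \sum_m alive pi f g sigma th n m = 1.
Proof.
elim: n => [|n IH]; first by rewrite big_ord0 add0r; exact: g_distr.2.
by rewrite big_ord_recr /= -addrA sum_alive_succ.
Qed.

Lemma sum_end_prob_le1 : \sum_m end_prob pi f g sigma th m <= 1.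
Proof.
pose u m n := \sum_(t < n) ends_at pi f g sigma th t m.
have sum_u_le1 n : \sum_m u m n <= 1.
  rewrite /u exchange_big /= -(sum_ends_at_alive n) lerDl.
  by apply: sumr_ge0 => m _; exact: alive_ge0.
have u_le1 m n : u m n <= 1.
  apply: le_trans (sum_u_le1 n); rewrite (bigD1 m) //= lerDl.
  by apply: sumr_ge0 => j _; apply: sumr_ge0 => t _; exact: ends_at_ge0.
have u_cvg m : cvgn (u m).
  apply: nondecreasing_is_cvgn; last by exists 1 => _ [n _ <-]; exact: u_le1.
  by apply/nondecreasing_seqP => n; rewrite /u big_ord_recr /= lerDl ends_at_ge0.
have sum_u_cvg : (fun n => \sum_m u m n) @ \oo --> \sum_m limn (u m).
  by apply: cvg_big => [[x y]|m _]; [exact: add_continuous|exact: u_cvg].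
rewrite -(cvg_lim _ sum_u_cvg) //; apply: limr_le; first exact: cvgP sum_u_cvg.
exact: nearW.
Qed.

End Dynamics.

Section SenderTypes.
Variables (R : realType) (S M : finType).
Variables (pi : bool -> S -> R) (f : M -> S -> M -> R) (g : M -> R).

Lemma alive_eq {sigma sigma' : M -> bool -> R} {th} :
  (forall m, sigma m th = sigma' m th) ->
  forall t m, alive pi f g sigma th t m = alive pi f g sigma' th t m.
Proof.
by move=> eq_th; elim=> [|t IH] m //=; apply: eq_bigr => i _; rewrite IH eq_th.
Qed.

Lemma end_prob_eq {sigma sigma' : M -> bool -> R} {th} :
  (forall m, sigma m th = sigma' m th) ->
  forall m, end_prob pi f g sigma th m = end_prob pi f g sigma' th m.
Proof.
move=> eq_th m; congr (limn _); apply: boolp.funext => n; apply: eq_bigr => t _.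
by rewrite /ends_at (alive_eq eq_th) eq_th.
Qed.

Definition payoff_of_type (a : M -> R) (sigma : M -> bool -> R) th :=
  \sum_m end_prob pi f g sigma th m * a m.

Definition end_mass_of_type (sigma : M -> bool -> R) th :=
  \sum_m end_prob pi f g sigma th m.

Definition splice (sigmaH sigmaL : M -> bool -> R) m (th : bool) : R :=
  if th then sigmaH m true else sigmaL m false.

Lemma best_response_L_optimal p a (sigma sigma' : M -> bool -> R) :
  0 < p < 1 -> best_response pi f g p a sigma -> strategy_ok sigma' ->
  payoff_of_type a sigma' false <= payoff_of_type a sigma false.
Proof.
move=> /andP[p_gt0 p_lt1] [sigma_ok sigma_br] sigma'_ok.
have splice_ok : strategy_ok (splice sigma sigma') by move=> m [] /=.
have := sigma_br _ splice_ok; rewrite /US.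
rewrite (eq_bigr (fun m => end_prob pi f g sigma true m * a m)); last first.
  by move=> m _; rewrite (@end_prob_eq (splice sigma sigma') sigma true).
rewrite [X in _ + (1 - p) * X <= _](eq_bigr
    (fun m => end_prob pi f g sigma' false m * a m)); last first.
  by move=> m _; rewrite (@end_prob_eq (splice sigma sigma') sigma' false).
by rewrite lerD2l ler_pM2l // subr_gt0.
Qed.

Lemma UR_as_US p a (sigma : M -> bool -> R) :
  UR pi f g p a sigma = US pi f g p a sigma
    + (1 - p) * (end_mass_of_type sigma false - 2 * payoff_of_type a sigma false).
Proof.
rewrite /UR /US /end_mass_of_type /payoff_of_type.
under [X in _ + _ * X = _]eq_bigr => m _ do rewrite mulrBr mulr1.
rewrite sumrB; ring.
Qed.

End SenderTypes.

Lemma convex_comb_eq1_r (R : realFieldType) (p x y : R) :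
  0 < p < 1 -> x <= 1 -> y <= 1 -> p * x + (1 - p) * y = 1 -> y = 1.
Proof. by move=> /andP[? ?] ? ? ?; nra. Qed.

Theorem lemma1 (R : realType) (S M : finType) (p : R)
  (pi : bool -> S -> R) (f : M -> S -> M -> R) (g : M -> R) (a : M -> R)
  (sigma sigma' : M -> bool -> R) :
  0 < p < 1 ->
  signal_ok pi ->
  protocol_ok f g a ->
  best_response pi f g p a sigma ->
  best_response pi f g p a sigma' ->
  ends_prob pi f g p sigma = 1 ->
  ends_prob pi f g p sigma' = 1 ->
  UR pi f g p a sigma = UR pi f g p a sigma'.
Proof.
move=> p01 [pi_gt0 [pi_sum1 _]] [f_distr [g_distr _]]
  [sigma_ok sigma_br] [sigma'_ok sigma'_br] ends1 ends1'.
have pi_ge0 th s : 0 <= pi th s by exact: ltW.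
have mass_le1 := sum_end_prob_le1 pi_ge0 pi_sum1 f_distr g_distr.
have massL1 s : strategy_ok s -> ends_prob pi f g p s = 1 ->
    end_mass_of_type pi f g s false = 1.
  by move=> s_ok; apply: convex_comb_eq1_r p01 _ _; exact: mass_le1.
have payoffL : payoff_of_type pi f g a sigma false =
               payoff_of_type pi f g a sigma' false.
  by apply/eqP; rewrite eq_le !(best_response_L_optimal p01) //; split.
have USeq : US pi f g p a sigma = US pi f g p a sigma'.
  by apply/eqP; rewrite eq_le sigma_br // sigma'_br.
by rewrite !UR_as_US USeq payoffL massL1 // massL1.
Qed.
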